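(* For $p,q>0$, $x\ge0$ and $0\le y\le 1$, $$B_{p,q}(x,y)=B_{p,q+1}(x,y)-\frac{e^{-x/2}}{qB(p,q)}\,y^p(1-y)^q M\!\left(p+q,p,\tfrac12xy\right),$$ and the same identity holds for $\bar B_{p,q}(x,y)$ with the sign of the last term reversed. Moreover, if in addition $p>1$, then $$B_{p,q}(x,y)=B_{p-1,q+1}(x,y)-\frac{e^{-x/2}}{qB(p,q)}\,y^{p-1}(1-y)^q M\!\left(p+q,p,\tfrac12xy\right).$$
   Context: For $p,q>0$ and $0\le y\le 1$, $I_y(p,q)=\frac{1}{B(p,q)}\int_0^y t^{p-1}(1-t)^{q-1}\,dt$ is the regularized incomplete beta function, with $B(p,q)=\Gamma(p)\Gamma(q)/\Gamma(p+q)$. The cumulative noncentral beta distribution is $B_{p,q}(x,y)=e^{-x/2}\sum_{j=0}^\infty \frac{1}{j!}\left(\frac x2\right)^j I_y(p+j,q)$ for $x\ge0$, and its complement is $\bar B_{p,q}(x,y)=1-B_{p,q}(x,y)$. $M(a,b,z)=\sum_{n\ge0}\frac{(a)_n}{(b)_n}\frac{z^n}{n!}$ is Kummer's confluent hypergeometric function, and $(a)_n$ is the Pochhammer symbol. *)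

From Stdlib Require Import Reals Lra Arith ClassicalEpsilon.
Open Scope R_scope.

(* real power with 0^a := 0 (used only with a > 0, or at measure-zero points) *)
Definition rpow (x a : R) : R :=
  if Rlt_dec 0 x then Rpower x a else 0.

(* l is the (improper) Riemann integral of f over the open interval (a,b):
   limit of the proper Riemann integrals over [u,v] as u -> a+, v -> b-. *)
Definition is_improper_int (f : R -> R) (a b l : R) : Prop :=
  forall eps, 0 < eps -> exists delta, 0 < delta /\
    forall u v, a < u -> u < a + delta -> b - delta < v -> v < b -> u < v ->
      exists pr : Riemann_integrable f u v, Rabs (RiemannInt pr - l) < eps.

Definition improper_int (f : R -> R) (a b : R) : R :=
  if Rlt_dec a b then epsilon (inhabits 0) (is_improper_int f a b) else 0.

Definition beta_integrand (p q : R) (t : R) : R :=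
  rpow t (p - 1) * rpow (1 - t) (q - 1).

Definition Beta (p q : R) : R := improper_int (beta_integrand p q) 0 1.

Definition Ibeta (y p q : R) : R :=
  improper_int (beta_integrand p q) 0 y / Beta p q.

Definition series (u : nat -> R) : R :=
  epsilon (inhabits 0) (fun l => Un_cv (fun N => sum_f_R0 u N) l).

Fixpoint poch (a : R) (n : nat) : R :=
  match n with
  | O => 1
  | S k => poch a k * (a + INR k)
  end.

Definition kummerM (a b z : R) : R :=
  series (fun n => poch a n / poch b n * z ^ n / INR (Factorial.fact n)).

Definition ncbeta (p q x y : R) : R :=
  exp (- x / 2) * series (fun j => / INR (Factorial.fact j) * (x / 2) ^ j * Ibeta y (p + INR j) q).

Definition ncbetaC (p q x y : R) : R := 1 - ncbeta p q x y.

From Pilot Require Import Defs.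
From Stdlib Require Import Reals Lra ClassicalEpsilon.
From Coquelicot Require Import Coquelicot.
Open Scope R_scope.

(* Everything reduces to two identities for the unnormalised incomplete beta function
   B_y(a,b) = int_0^y t^(a-1) (1-t)^(b-1) dt (an improper Riemann integral):
     split:  B_y(a,b) = B_y(a,b+1) + B_y(a+1,b),
     parts:  a B_y(a,b+1) - b B_y(a+1,b) = y^a (1-y)^b.
   They hold for proper integrals over [u,v] inside (0,y) by the pointwise identity
   (1-t) + t = 1 and the fundamental theorem of calculus, and pass to the limit
   u -> 0+, v -> y- by uniqueness and linearity of such limits; existence of the
   limits comes from positivity and a uniform bound of the integrand's integrals.
   At y = 1 they give B(a+1,b) = a/(a+b) B(a,b) and B(a,b+1) = b/(a+b) B(a,b), hence
   the recurrences I_y(a,b) = I_y(a,b+1) - y^a(1-y)^b/(b B(a,b)) and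
   I_y(a+1,b) = I_y(a,b+1) - y^a(1-y)^b/(b B(a+1,b)).  Inserted termwise in the
   Poisson mixture defining B_{p,q}(x,y), and using B(p+j,q) = B(p,q) (p)_j/(p+q)_j,
   the differences of the terms are exactly the terms of Kummer's series
   M(p+q, p, xy/2); summing (all series converge by comparison with exp(x/2)) yields
   the theorem. *)

Lemma rpow_pos_eq t c : 0 < t -> rpow t c = Rpower t c.
Proof. intros Ht; unfold rpow; destruct (Rlt_dec 0 t); [reflexivity | lra]. Qed.

Lemma rpow_nonpos t c : t <= 0 -> rpow t c = 0.
Proof. intros Ht; unfold rpow; destruct (Rlt_dec 0 t); [lra | reflexivity]. Qed.

Lemma rpow_gt0 t c : 0 < t -> 0 < rpow t c.
Proof. intros Ht; rewrite rpow_pos_eq by exact Ht; apply exp_pos. Qed.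

Lemma rpow_le1 t c : 0 < t <= 1 -> 0 <= c -> rpow t c <= 1.
Proof.
  intros Ht Hc; rewrite rpow_pos_eq by lra; unfold Rpower; rewrite <- exp_0.
  assert (Hln : ln t <= 0) by (rewrite <- ln_1; apply ln_le; lra).
  destruct (Req_dec (c * ln t) 0) as [E | E]; [rewrite E; lra |].
  left; apply exp_increasing; nra.
Qed.

Lemma rpow_pred t c : 0 < t -> rpow t c = t * rpow t (c - 1).
Proof.
  intros Ht; rewrite !rpow_pos_eq by exact Ht.
  rewrite <- (Rpower_1 t) at 2 by exact Ht; rewrite <- Rpower_plus; f_equal; ring.
Qed.

Lemma rpow_plus_nat y c j : 0 <= y -> rpow y (c + INR j) = rpow y c * y ^ j.
Proof.
  intros Hy; destruct (Rlt_dec 0 y) as [Hy' | Hy'].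
  - rewrite !rpow_pos_eq, Rpower_plus, Rpower_pow by exact Hy'; reflexivity.
  - rewrite !rpow_nonpos by lra; ring.
Qed.

Lemma rpow_small c eps : 0 < c -> 0 < eps ->
  exists d, 0 < d /\ forall t, 0 < t < d -> rpow t c < eps.
Proof.
  intros Hc He; exists (exp (ln eps / c)); split; [apply exp_pos |].
  intros t Ht; rewrite rpow_pos_eq by lra; unfold Rpower.
  rewrite <- (exp_ln eps) by exact He; apply exp_increasing.
  assert (Hlt : ln t < ln eps / c)
    by (rewrite <- (ln_exp (ln eps / c)); apply ln_increasing; lra).
  apply (Rmult_lt_compat_l c) in Hlt; [| exact Hc].
  replace (c * (ln eps / c)) with (ln eps) in Hlt by (field; lra); lra.
Qed.

Lemma is_derive_rpow c t : 0 < t ->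
  is_derive (fun s => rpow s c) t (c * rpow t (c - 1)).
Proof.
  intros Ht; rewrite rpow_pos_eq by exact Ht.
  apply (is_derive_ext_loc (fun s => Rpower s c)).
  - apply (locally_interval _ t 0 p_infty); [exact Ht | exact I |].
    intros s Hs _; symmetry; apply rpow_pos_eq; exact Hs.
  - apply is_derive_Reals, derivable_pt_lim_power; exact Ht.
Qed.

Lemma is_derive_rpow_compl c t : t < 1 ->
  is_derive (fun s => rpow (1 - s) c) t (- (c * rpow (1 - t) (c - 1))).
Proof.
  intros Ht.
  replace (- (c * rpow (1 - t) (c - 1))) with ((-1) * (c * rpow (1 - t) (c - 1))) by ring.
  apply (is_derive_comp (fun s => rpow s c) (fun s => 1 - s)).
  - apply is_derive_rpow; lra.
  - auto_derive; [exact I | ring].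
Qed.

Lemma continuous_rpow_pos c t : 0 < t -> continuous (fun s => rpow s c) t.
Proof.
  intros Ht; apply (ex_derive_continuous (fun s => rpow s c)).
  eexists; apply is_derive_rpow, Ht.
Qed.

Lemma continuous_rpow c y : 0 < c -> continuous (fun s => rpow s c) y.
Proof.
  intros Hc; destruct (Rtotal_order y 0) as [Hy | [Hy | Hy]].
  - apply (continuous_ext_loc _ (fun _ => 0)); [| apply continuous_const].
    apply (locally_interval _ y m_infty 0); [exact I | exact Hy |].
    intros s _ Hs; simpl in Hs; symmetry; apply rpow_nonpos; lra.
  - subst y; apply continuity_pt_filterlim.
    intros eps He. destruct (rpow_small c eps Hc He) as [d [Hd Hsmall]].
    exists d; split; [exact Hd |].
    intros s [_ Hs]; simpl in Hs |- *; unfold R_dist in Hs |- *.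
    rewrite Rminus_0_r in Hs; rewrite (rpow_nonpos 0) by lra; rewrite Rminus_0_r.
    destruct (Rlt_dec 0 s) as [Hs0 | Hs0].
    + rewrite Rabs_right by (left; apply rpow_gt0, Hs0).
      apply Hsmall; split; [exact Hs0 | apply Rabs_def2 in Hs; lra].
    + rewrite rpow_nonpos, Rabs_R0 by lra; exact He.
  - apply continuous_rpow_pos, Hy.
Qed.

Lemma RInt_antiderivative (F f : R -> R) u v : u <= v ->
  (forall t, u <= t <= v -> is_derive F t (f t)) ->
  (forall t, u <= t <= v -> continuous f t) ->
  RInt f u v = F v - F u.
Proof.
  intros Huv HF Hf; apply is_RInt_unique.
  apply (is_RInt_derive F f); intros t Ht; rewrite Rmin_left, Rmax_right in Ht by exact Huv.
  - apply HF, Ht.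
  - apply Hf, Ht.
Qed.

(* The boundary term y^a (1-y)^b of the integration by parts. *)
Definition beta_kernel (a b t : R) : R := rpow t a * rpow (1 - t) b.

Lemma beta_integrand_pos a b t : 0 < t < 1 -> 0 < beta_integrand a b t.
Proof. intros Ht; apply Rmult_lt_0_compat; apply rpow_gt0; lra. Qed.

Lemma beta_integrand_split a b t : 0 < t < 1 ->
  beta_integrand a b t = beta_integrand a (b + 1) t + beta_integrand (a + 1) b t.
Proof.
  intros Ht; unfold beta_integrand.
  replace (b + 1 - 1) with b by ring; replace (a + 1 - 1) with a by ring.
  rewrite (rpow_pred (1 - t) b), (rpow_pred t a) by lra; ring.
Qed.

Lemma beta_integrand_le a b t : 0 < a -> 0 < b -> 0 < t < 1 ->
  beta_integrand a b t <= rpow t (a - 1) + rpow (1 - t) (b - 1).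
Proof.
  intros Ha Hb Ht; rewrite beta_integrand_split by exact Ht; unfold beta_integrand.
  replace (b + 1 - 1) with b by ring; replace (a + 1 - 1) with a by ring.
  pose proof (rpow_le1 (1 - t) b ltac:(lra) ltac:(lra)).
  pose proof (rpow_le1 t a ltac:(lra) ltac:(lra)).
  pose proof (rpow_gt0 t (a - 1) ltac:(lra)).
  pose proof (rpow_gt0 (1 - t) (b - 1) ltac:(lra)).
  nra.
Qed.

Lemma continuous_beta_integrand a b t : 0 < t < 1 -> continuous (beta_integrand a b) t.
Proof.
  intros Ht; apply (continuous_mult (fun s => rpow s (a - 1)) (fun s => rpow (1 - s) (b - 1))).
  - apply continuous_rpow_pos; lra.
  - apply (continuous_comp (fun s => 1 - s) (fun s => rpow s (b - 1))).
    + apply (continuous_minus (fun _ => 1) (fun s => s));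
        [apply continuous_const | apply continuous_id].
    + apply continuous_rpow_pos; lra.
Qed.

Lemma ex_RInt_beta_integrand a b u v : 0 < u -> u <= v -> v < 1 ->
  ex_RInt (beta_integrand a b) u v.
Proof.
  intros Hu Huv Hv; apply (ex_RInt_continuous (beta_integrand a b)); intros t Ht.
  rewrite Rmin_left, Rmax_right in Ht by exact Huv.
  apply continuous_beta_integrand; lra.
Qed.

(* Integration by parts in disguise: the kernel t^a (1-t)^b is an antiderivative of
   a t^(a-1) (1-t)^b - b t^a (1-t)^(b-1). *)
Lemma is_derive_beta_kernel a b t : 0 < t < 1 ->
  is_derive (beta_kernel a b) t
    (a * beta_integrand a (b + 1) t - b * beta_integrand (a + 1) b t).
Proof.
  intros Ht; unfold beta_integrand.
  replace (b + 1 - 1) with b by ring; replace (a + 1 - 1) with a by ring.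
  replace (a * (rpow t (a - 1) * rpow (1 - t) b) - b * (rpow t a * rpow (1 - t) (b - 1)))
    with (a * rpow t (a - 1) * rpow (1 - t) b + rpow t a * (- (b * rpow (1 - t) (b - 1))))
    by ring.
  apply (is_derive_mult (fun s => rpow s a) (fun s => rpow (1 - s) b)).
  - apply is_derive_rpow; lra.
  - apply is_derive_rpow_compl; lra.
  - intros; apply Rmult_comm.
Qed.

Lemma continuous_beta_kernel a b t : 0 < a -> 0 < b -> continuous (beta_kernel a b) t.
Proof.
  intros Ha Hb; apply (continuous_mult (fun s => rpow s a) (fun s => rpow (1 - s) b)).
  - apply continuous_rpow, Ha.
  - apply (continuous_comp (fun s => 1 - s) (fun s => rpow s b)).
    + apply (continuous_minus (fun _ => 1) (fun s => s));
        [apply continuous_const | apply continuous_id].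
    + apply continuous_rpow, Hb.
Qed.

Lemma beta_kernel_0 a b : 0 < a -> beta_kernel a b 0 = 0.
Proof. intros Ha; unfold beta_kernel; rewrite (rpow_nonpos 0) by lra; ring. Qed.

Lemma beta_kernel_1 a b : 0 < b -> beta_kernel a b 1 = 0.
Proof. intros Hb; unfold beta_kernel; rewrite (rpow_nonpos (1 - 1)) by lra; ring. Qed.

Lemma RInt_beta_integrand_split a b u v : 0 < u -> u <= v -> v < 1 ->
  RInt (beta_integrand a b) u v
  = RInt (beta_integrand a (b + 1)) u v + RInt (beta_integrand (a + 1) b) u v.
Proof.
  intros Hu Huv Hv.
  rewrite <- (RInt_plus (beta_integrand a (b + 1)) (beta_integrand (a + 1) b))
    by (apply ex_RInt_beta_integrand; lra).
  apply RInt_ext; intros t Ht; rewrite Rmin_left, Rmax_right in Ht by exact Huv.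
  apply beta_integrand_split; lra.
Qed.

Lemma RInt_beta_parts a b u v : 0 < u -> u <= v -> v < 1 ->
  a * RInt (beta_integrand a (b + 1)) u v - b * RInt (beta_integrand (a + 1) b) u v
  = beta_kernel a b v - beta_kernel a b u.
Proof.
  intros Hu Huv Hv.
  rewrite <- (RInt_antiderivative (beta_kernel a b)
    (fun t => a * beta_integrand a (b + 1) t - b * beta_integrand (a + 1) b t) u v Huv).
  - rewrite (RInt_minus (fun t => a * beta_integrand a (b + 1) t)
                        (fun t => b * beta_integrand (a + 1) b t)).
    + rewrite (RInt_scal (beta_integrand a (b + 1))), (RInt_scal (beta_integrand (a + 1) b))
        by (apply ex_RInt_beta_integrand; lra).
      reflexivity.
    + apply (ex_RInt_scal (beta_integrand a (b + 1))), ex_RInt_beta_integrand; lra.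
    + apply (ex_RInt_scal (beta_integrand (a + 1) b)), ex_RInt_beta_integrand; lra.
  - intros t Ht; apply is_derive_beta_kernel; lra.
  - intros t Ht.
    apply (continuous_minus (fun t => a * beta_integrand a (b + 1) t)
                            (fun t => b * beta_integrand (a + 1) b t));
      apply (continuous_scal_r _ (fun t => beta_integrand _ _ t)), continuous_beta_integrand; lra.
Qed.

(* The integrals of the integrand over compact subintervals of (0,1) are uniformly
   bounded, via the majorant t^(a-1) + (1-t)^(b-1) and its explicit antiderivative. *)
Lemma RInt_beta_integrand_bound a b u v : 0 < a -> 0 < b -> 0 < u -> u <= v -> v < 1 ->
  RInt (beta_integrand a b) u v <= 1 / a + 1 / b.
Proof.
  intros Ha Hb Hu Huv Hv.
  set (g t := rpow t (a - 1) + rpow (1 - t) (b - 1)).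
  set (G t := / a * rpow t a - / b * rpow (1 - t) b).
  assert (Hg : forall t, u <= t <= v -> continuous g t).
  { intros t Ht; apply (continuous_plus (fun s => rpow s (a - 1)) (fun s => rpow (1 - s) (b - 1))).
    - apply continuous_rpow_pos; lra.
    - apply (continuous_comp (fun s => 1 - s) (fun s => rpow s (b - 1))).
      + apply (continuous_minus (fun _ => 1) (fun s => s));
          [apply continuous_const | apply continuous_id].
      + apply continuous_rpow_pos; lra. }
  assert (HG : forall t, u <= t <= v -> is_derive G t (g t)).
  { intros t Ht; unfold G, g.
    replace (rpow t (a - 1) + rpow (1 - t) (b - 1))
      with (/ a * (a * rpow t (a - 1)) - / b * (- (b * rpow (1 - t) (b - 1))))
      by (field; lra).
    apply (is_derive_minus (fun s => / a * rpow s a) (fun s => / b * rpow (1 - s) b)).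
    - apply (is_derive_scal (fun s => rpow s a)), is_derive_rpow; lra.
    - apply (is_derive_scal (fun s => rpow (1 - s) b)), is_derive_rpow_compl; lra. }
  apply Rle_trans with (RInt g u v).
  - apply RInt_le; [exact Huv | apply ex_RInt_beta_integrand; lra | |].
    + apply (ex_RInt_continuous g); intros t Ht.
      rewrite Rmin_left, Rmax_right in Ht by exact Huv; apply Hg, Ht.
    + intros t Ht; apply beta_integrand_le; lra.
  - rewrite (RInt_antiderivative G g u v Huv HG Hg); unfold G.
    pose proof (rpow_le1 v a ltac:(lra) ltac:(lra)).
    pose proof (rpow_le1 (1 - u) b ltac:(lra) ltac:(lra)).
    pose proof (rpow_gt0 u a Hu). pose proof (rpow_gt0 (1 - v) b ltac:(lra)).
    pose proof (Rinv_0_lt_compat a Ha). pose proof (Rinv_0_lt_compat b Hb).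
    unfold Rdiv; nra.
Qed.

Lemma continuous_eps (H : R -> R) x : continuous H x ->
  forall eps, 0 < eps -> exists d, 0 < d /\
    forall y, Rabs (y - x) < d -> Rabs (H y - H x) < eps.
Proof.
  intros Hc eps He.
  pose proof (proj1 (continuity_pt_locally H x) (proj2 (continuity_pt_filterlim H x) Hc))
    as Hloc.
  destruct (Hloc (mkposreal eps He)) as [d Hd].
  exists d; split; [apply cond_pos | intros y Hy; apply Hd, Hy].
Qed.

(* F u v tends to L as u -> a+ and v -> b- (with u < v); this is the notion of
   convergence underlying the improper integral of Defs. *)
Definition ends_limit (F : R -> R -> R) (a b L : R) : Prop :=
  forall eps, 0 < eps -> exists d, 0 < d /\
    forall u v, a < u -> u < a + d -> b - d < v -> v < b -> u < v ->
      Rabs (F u v - L) < eps.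

Lemma ends_limit_unique F a b L1 L2 : a < b ->
  ends_limit F a b L1 -> ends_limit F a b L2 -> L1 = L2.
Proof.
  intros Hab H1 H2; apply Rminus_diag_uniq, Rabs_eq_0.
  apply Rle_antisym; [apply Rnot_lt_le; intros Hlt | apply Rabs_pos].
  set (e := Rabs (L1 - L2) / 2).
  destruct (H1 e ltac:(unfold e; lra)) as [d1 [Hd1 H1']].
  destruct (H2 e ltac:(unfold e; lra)) as [d2 [Hd2 H2']].
  set (d := Rmin (Rmin d1 d2) ((b - a) / 2)).
  assert (Hd : 0 < d) by (unfold d; repeat apply Rmin_pos; lra).
  assert (d <= d1 /\ d <= d2 /\ d <= (b - a) / 2) as [? [? ?]].
  { unfold d; pose proof (Rmin_l (Rmin d1 d2) ((b - a) / 2));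
      pose proof (Rmin_r (Rmin d1 d2) ((b - a) / 2));
      pose proof (Rmin_l d1 d2); pose proof (Rmin_r d1 d2); lra. }
  specialize (H1' (a + d / 2) (b - d / 2)); specialize (H2' (a + d / 2) (b - d / 2)).
  set (F0 := F (a + d / 2) (b - d / 2)) in *.
  assert (Rabs (L1 - L2) <= Rabs (F0 - L2) + Rabs (F0 - L1)).
  { replace (L1 - L2) with ((F0 - L2) - (F0 - L1)) by ring.
    eapply Rle_trans; [apply Rabs_triang | rewrite Rabs_Ropp; lra]. }
  assert (Rabs (F0 - L1) < e) by (apply H1'; lra).
  assert (Rabs (F0 - L2) < e) by (apply H2'; lra).
  unfold e in *; lra.
Qed.

Lemma ends_limit_ext F G a b L :
  (forall u v, a < u -> u < v -> v < b -> F u v = G u v) ->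
  ends_limit F a b L -> ends_limit G a b L.
Proof.
  intros HFG HF eps He; destruct (HF eps He) as [d [Hd HF']].
  exists d; split; [exact Hd |]; intros u v H1 H2 H3 H4 H5.
  rewrite <- HFG by lra; apply HF'; assumption.
Qed.

Lemma ends_limit_lin F G a b L1 L2 c1 c2 :
  ends_limit F a b L1 -> ends_limit G a b L2 ->
  ends_limit (fun u v => c1 * F u v + c2 * G u v) a b (c1 * L1 + c2 * L2).
Proof.
  intros HF HG eps He.
  set (K := Rabs c1 + Rabs c2 + 1).
  assert (HK : 0 < K) by (unfold K; pose proof (Rabs_pos c1); pose proof (Rabs_pos c2); lra).
  set (e := eps / K).
  assert (He' : 0 < e) by (apply Rdiv_lt_0_compat; lra).
  destruct (HF e He') as [d1 [Hd1 HF']]; destruct (HG e He') as [d2 [Hd2 HG']].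
  exists (Rmin d1 d2); split; [apply Rmin_pos; lra |].
  intros u v H1 H2 H3 H4 H5.
  pose proof (Rmin_l d1 d2); pose proof (Rmin_r d1 d2).
  specialize (HF' u v H1 ltac:(lra) ltac:(lra) H4 H5).
  specialize (HG' u v H1 ltac:(lra) ltac:(lra) H4 H5).
  replace (c1 * F u v + c2 * G u v - (c1 * L1 + c2 * L2))
    with (c1 * (F u v - L1) + c2 * (G u v - L2)) by ring.
  eapply Rle_lt_trans; [apply Rabs_triang |]; rewrite !Rabs_mult.
  assert (Rabs c1 * Rabs (F u v - L1) <= Rabs c1 * e)
    by (apply Rmult_le_compat_l; [apply Rabs_pos | lra]).
  assert (Rabs c2 * Rabs (G u v - L2) <= Rabs c2 * e)
    by (apply Rmult_le_compat_l; [apply Rabs_pos | lra]).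
  assert (K * e = eps) by (unfold e; field; lra).
  unfold K in *; nra.
Qed.

Lemma ends_limit_continuous (H : R -> R) a b :
  continuous H a -> continuous H b ->
  ends_limit (fun u v => H v - H u) a b (H b - H a).
Proof.
  intros Ha Hb eps He.
  destruct (continuous_eps H a Ha (eps / 2) ltac:(lra)) as [d1 [Hd1 Ha']].
  destruct (continuous_eps H b Hb (eps / 2) ltac:(lra)) as [d2 [Hd2 Hb']].
  exists (Rmin d1 d2); split; [apply Rmin_pos; lra |].
  intros u v H1 H2 H3 H4 _.
  pose proof (Rmin_l d1 d2); pose proof (Rmin_r d1 d2).
  assert (Rabs (H u - H a) < eps / 2) by (apply Ha', Rabs_def1; lra).
  assert (Rabs (H v - H b) < eps / 2) by (apply Hb', Rabs_def1; lra).
  replace (H v - H u - (H b - H a)) with ((H v - H b) - (H u - H a)) by ring.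
  eapply Rle_lt_trans; [apply Rabs_triang | rewrite Rabs_Ropp; lra].
Qed.

Lemma ends_limit_of_is_improper_int f a b l :
  is_improper_int f a b l -> ends_limit (RInt f) a b l.
Proof.
  intros H eps He; destruct (H eps He) as [d [Hd H']].
  exists d; split; [exact Hd |]; intros u v H1 H2 H3 H4 H5.
  destruct (H' u v H1 H2 H3 H4 H5) as [pr Hpr]; rewrite (RInt_Reals f u v pr); exact Hpr.
Qed.

Lemma is_improper_int_of_ends_limit f a b l :
  (forall u v, a < u -> u <= v -> v < b -> ex_RInt f u v) ->
  ends_limit (RInt f) a b l -> is_improper_int f a b l.
Proof.
  intros Hex H eps He; destruct (H eps He) as [d [Hd H']].
  exists d; split; [exact Hd |]; intros u v H1 H2 H3 H4 H5.
  exists (ex_RInt_Reals_0 f u v (Hex u v H1 ltac:(lra) H4)).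
  rewrite <- RInt_Reals; apply H'; assumption.
Qed.

Lemma improper_int_eq f a b l : a < b ->
  (forall u v, a < u -> u <= v -> v < b -> ex_RInt f u v) ->
  ends_limit (RInt f) a b l -> improper_int f a b = l.
Proof.
  intros Hab Hex H; unfold improper_int; destruct (Rlt_dec a b) as [_ | Hn]; [| lra].
  apply (ends_limit_unique (RInt f) a b); [exact Hab | | exact H].
  apply ends_limit_of_is_improper_int.
  apply (epsilon_spec (inhabits 0) (is_improper_int f a b)).
  exists l; apply is_improper_int_of_ends_limit; assumption.
Qed.

Definition inner_integrals (f : R -> R) (a b : R) (r : R) : Prop :=
  exists u v, a < u /\ u < v /\ v < b /\ r = RInt f u v.

Lemma ends_limit_nonneg f a b M : a < b ->
  (forall u v, a < u -> u <= v -> v < b -> ex_RInt f u v) ->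
  (forall t, a < t < b -> 0 <= f t) ->
  (forall u v, a < u -> u <= v -> v < b -> RInt f u v <= M) ->
  { l | is_lub (inner_integrals f a b) l /\ ends_limit (RInt f) a b l }.
Proof.
  intros Hab Hex Hpos Hbound.
  destruct (completeness (inner_integrals f a b)) as [l [Hub Hleast]].
  { exists M; intros r [u [v [H1 [H2 [H3 ->]]]]]; apply Hbound; lra. }
  { exists (RInt f (a + (b - a) / 3) (b - (b - a) / 3)).
    exists (a + (b - a) / 3), (b - (b - a) / 3); repeat split; lra. }
  exists l; split; [split; assumption |]; intros eps He.
  assert (exists r, inner_integrals f a b r /\ l - eps < r)
    as [r [[u0 [v0 [H1 [H2 [H3 ->]]]]] Hr]].
  { apply Classical_Prop.NNPP; intros Hn.
    assert (is_upper_bound (inner_integrals f a b) (l - eps)).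
    { intros r Hin; apply Rnot_lt_le; intros Hlt; apply Hn; exists r; split; assumption. }
    specialize (Hleast _ H); lra. }
  exists (Rmin (u0 - a) (b - v0)); split; [apply Rmin_pos; lra |].
  intros u v Hu Hud Hvd Hv Huv.
  pose proof (Rmin_l (u0 - a) (b - v0)); pose proof (Rmin_r (u0 - a) (b - v0)).
  assert (RInt f u v <= l) by (apply Hub; exists u, v; repeat split; lra).
  assert (Hsplit : RInt f u v = RInt f u u0 + (RInt f u0 v0 + RInt f v0 v)).
  { rewrite <- (RInt_Chasles f u u0 v), <- (RInt_Chasles f u0 v0 v) by (apply Hex; lra).
    reflexivity. }
  assert (0 <= RInt f u u0) by (apply RInt_ge_0; [lra | apply Hex; lra | intros; apply Hpos; lra]).
  assert (0 <= RInt f v0 v) by (apply RInt_ge_0; [lra | apply Hex; lra | intros; apply Hpos; lra]).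
  apply Rabs_def1; lra.
Qed.

Definition partial_beta (a b y : R) : R := improper_int (beta_integrand a b) 0 y.

Lemma partial_beta_spec a b y : 0 < a -> 0 < b -> 0 < y <= 1 ->
  is_lub (inner_integrals (beta_integrand a b) 0 y) (partial_beta a b y)
  /\ ends_limit (RInt (beta_integrand a b)) 0 y (partial_beta a b y).
Proof.
  intros Ha Hb Hy.
  assert (Hex : forall u v, 0 < u -> u <= v -> v < y -> ex_RInt (beta_integrand a b) u v)
    by (intros; apply ex_RInt_beta_integrand; lra).
  destruct (ends_limit_nonneg (beta_integrand a b) 0 y (1 / a + 1 / b)) as [l [Hlub Hlim]].
  - lra.
  - exact Hex.
  - intros t Ht; apply Rlt_le, beta_integrand_pos; lra.
  - intros u v Hu Huv Hv; apply RInt_beta_integrand_bound; lra.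
  - unfold partial_beta; rewrite (improper_int_eq _ 0 y l); [split; assumption | lra | |];
      assumption.
Qed.

Lemma partial_beta_0 a b : partial_beta a b 0 = 0.
Proof. unfold partial_beta, improper_int; destruct (Rlt_dec 0 0); [lra | reflexivity]. Qed.

Lemma partial_beta_ge_sample a b y : 0 < a -> 0 < b -> 0 < y <= 1 ->
  RInt (beta_integrand a b) (y / 4) (3 * y / 4) <= partial_beta a b y.
Proof.
  intros Ha Hb Hy; destruct (partial_beta_spec a b y Ha Hb Hy) as [[Hub _] _].
  apply Hub; exists (y / 4), (3 * y / 4); repeat split; lra.
Qed.

Lemma partial_beta_nonneg a b y : 0 < a -> 0 < b -> 0 <= y <= 1 -> 0 <= partial_beta a b y.
Proof.
  intros Ha Hb Hy; destruct (Req_dec y 0) as [-> | Hy0]; [rewrite partial_beta_0; lra |].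
  eapply Rle_trans; [| apply partial_beta_ge_sample; lra].
  apply RInt_ge_0; [lra | apply ex_RInt_beta_integrand; lra |].
  intros t Ht; apply Rlt_le, beta_integrand_pos; lra.
Qed.

Lemma Beta_pos a b : 0 < a -> 0 < b -> 0 < Beta a b.
Proof.
  intros Ha Hb; change (Beta a b) with (partial_beta a b 1).
  eapply Rlt_le_trans; [| apply partial_beta_ge_sample; lra].
  replace 0 with (RInt (fun _ => 0) (1 / 4) (3 * 1 / 4))
    by (rewrite RInt_const; unfold scal; simpl; unfold mult; simpl; ring).
  apply RInt_lt; [lra | intros; apply continuous_beta_integrand; lra | |].
  - intros; apply continuous_const.
  - intros t Ht; apply beta_integrand_pos; lra.
Qed.

Lemma partial_beta_le_Beta a b y : 0 < a -> 0 < b -> 0 <= y <= 1 ->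
  partial_beta a b y <= Beta a b.
Proof.
  intros Ha Hb Hy; change (Beta a b) with (partial_beta a b 1).
  destruct (Req_dec y 0) as [-> | Hy0].
  { rewrite partial_beta_0; apply partial_beta_nonneg; lra. }
  destruct (partial_beta_spec a b y Ha Hb ltac:(lra)) as [[_ Hleast] _].
  destruct (partial_beta_spec a b 1 Ha Hb ltac:(lra)) as [[Hub _] _].
  apply Hleast; intros r [u [v [H1 [H2 [H3 ->]]]]]; apply Hub; exists u, v; repeat split; lra.
Qed.

(* B_y(a,b) = B_y(a,b+1) + B_y(a+1,b), from t^(a-1)(1-t)^(b-1) = t^(a-1)(1-t)^b + t^a(1-t)^(b-1). *)
Lemma partial_beta_split a b y : 0 < a -> 0 < b -> 0 <= y <= 1 ->
  partial_beta a b y = partial_beta a (b + 1) y + partial_beta (a + 1) b y.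
Proof.
  intros Ha Hb Hy; destruct (Req_dec y 0) as [-> | Hy0]; [rewrite !partial_beta_0; ring |].
  destruct (partial_beta_spec a b y) as [_ H0]; try lra.
  destruct (partial_beta_spec a (b + 1) y) as [_ H1]; try lra.
  destruct (partial_beta_spec (a + 1) b y) as [_ H2]; try lra.
  pose proof (ends_limit_lin _ _ 0 y _ _ 1 1 H1 H2) as Hsum.
  rewrite !Rmult_1_l in Hsum.
  apply (ends_limit_unique (RInt (beta_integrand a b)) 0 y); [lra | exact H0 |].
  revert Hsum; apply ends_limit_ext; intros u v Hu Huv Hv.
  rewrite (RInt_beta_integrand_split a b u v) by lra; ring.
Qed.

Lemma partial_beta_parts a b y : 0 < a -> 0 < b -> 0 <= y <= 1 ->
  a * partial_beta a (b + 1) y - b * partial_beta (a + 1) b y = beta_kernel a b y.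
Proof.
  intros Ha Hb Hy; destruct (Req_dec y 0) as [-> | Hy0].
  { rewrite !partial_beta_0, beta_kernel_0 by exact Ha; ring. }
  destruct (partial_beta_spec a (b + 1) y) as [_ H1]; try lra.
  destruct (partial_beta_spec (a + 1) b y) as [_ H2]; try lra.
  pose proof (ends_limit_lin _ _ 0 y _ _ a (- b) H1 H2) as Hlin.
  pose proof (ends_limit_continuous (beta_kernel a b) 0 y
                (continuous_beta_kernel a b 0 Ha Hb) (continuous_beta_kernel a b y Ha Hb))
    as Hker.
  rewrite beta_kernel_0, Rminus_0_r in Hker by exact Ha.
  replace (a * partial_beta a (b + 1) y - b * partial_beta (a + 1) b y)
    with (a * partial_beta a (b + 1) y + - b * partial_beta (a + 1) b y) by ring.
  apply (ends_limit_unique _ 0 y _ _ ltac:(lra) Hlin).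
  revert Hker; apply ends_limit_ext; intros u v Hu Huv Hv.
  rewrite <- (RInt_beta_parts a b u v) by lra; ring.
Qed.

(* The classical recurrences B(a+1,b) = a/(a+b) B(a,b) and B(a,b+1) = b/(a+b) B(a,b):
   the split and parts identities at y = 1, where the kernel vanishes. *)
Lemma Beta_succ a b : 0 < a -> 0 < b ->
  Beta (a + 1) b = a / (a + b) * Beta a b /\ Beta a (b + 1) = b / (a + b) * Beta a b.
Proof.
  intros Ha Hb; change Beta with (fun a b => partial_beta a b 1); cbv beta.
  pose proof (partial_beta_split a b 1 Ha Hb ltac:(lra)) as Hsplit.
  pose proof (partial_beta_parts a b 1 Ha Hb ltac:(lra)) as Hparts.
  rewrite beta_kernel_1 in Hparts by exact Hb.
  split; rewrite Hsplit; field_simplify_eq; lra.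
Qed.

Lemma Ibeta_bounds y a b : 0 < a -> 0 < b -> 0 <= y <= 1 -> 0 <= Ibeta y a b <= 1.
Proof.
  intros Ha Hb Hy; change (Ibeta y a b) with (partial_beta a b y / Beta a b).
  pose proof (Beta_pos a b Ha Hb).
  pose proof (partial_beta_nonneg a b y Ha Hb Hy).
  pose proof (partial_beta_le_Beta a b y Ha Hb Hy).
  split; [apply Rdiv_le_0_compat; lra |].
  apply (Rmult_le_reg_r (Beta a b)); [lra |].
  unfold Rdiv; rewrite Rmult_assoc, Rinv_l; lra.
Qed.

Lemma Ibeta_succ_r y a b : 0 < a -> 0 < b -> 0 <= y <= 1 ->
  Ibeta y a b = Ibeta y a (b + 1) - beta_kernel a b y / (b * Beta a b).
Proof.
  intros Ha Hb Hy; unfold Ibeta; fold (partial_beta a b y) (partial_beta a (b + 1) y).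
  destruct (Beta_succ a b Ha Hb) as [_ ->]; pose proof (Beta_pos a b Ha Hb).
  rewrite <- (partial_beta_parts a b y), (partial_beta_split a b y) by assumption.
  field; lra.
Qed.

Lemma Ibeta_shift y a b : 0 < a -> 0 < b -> 0 <= y <= 1 ->
  Ibeta y (a + 1) b = Ibeta y a (b + 1) - beta_kernel a b y / (b * Beta (a + 1) b).
Proof.
  intros Ha Hb Hy; unfold Ibeta; fold (partial_beta (a + 1) b y) (partial_beta a (b + 1) y).
  destruct (Beta_succ a b Ha Hb) as [-> ->]; pose proof (Beta_pos a b Ha Hb).
  rewrite <- (partial_beta_parts a b y) by assumption.
  field; lra.
Qed.

Lemma poch_pos a n : 0 < a -> 0 < poch a n.
Proof.
  intros Ha; induction n as [| n IH]; simpl; [lra |].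
  apply Rmult_lt_0_compat; [exact IH | pose proof (pos_INR n); lra].
Qed.

(* Iterating B(a+1,b) = a/(a+b) B(a,b): B(p+j,q) = B(p,q) (p)_j / (p+q)_j. *)
Lemma Beta_shift_nat p q j : 0 < p -> 0 < q ->
  Beta (p + INR j) q = Beta p q * poch p j / poch (p + q) j.
Proof.
  intros Hp Hq; induction j as [| j IH].
  - simpl; rewrite Rplus_0_r; field.
  - rewrite S_INR; replace (p + (INR j + 1)) with (p + INR j + 1) by ring.
    pose proof (pos_INR j).
    destruct (Beta_succ (p + INR j) q ltac:(lra) Hq) as [-> _]; rewrite IH; simpl.
    pose proof (poch_pos p j Hp); pose proof (poch_pos (p + q) j ltac:(lra)).
    field; repeat split; lra.
Qed.

Lemma series_eq u l : Un_cv (fun N => sum_f_R0 u N) l -> series u = l.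
Proof.
  intros H; unfold series; apply (UL_sequence (fun N => sum_f_R0 u N)); [| exact H].
  apply (epsilon_spec (inhabits 0) (fun l => Un_cv (fun N => sum_f_R0 u N) l)).
  exists l; exact H.
Qed.

Lemma series_difference (F G k : nat -> R) K lF lG :
  Un_cv (fun N => sum_f_R0 F N) lF -> Un_cv (fun N => sum_f_R0 G N) lG ->
  (forall j, G j - F j = K * k j) -> lF = lG - K * series k.
Proof.
  intros HF HG Hj.
  pose proof (CV_minus _ _ _ _ HG HF) as Hdiff.
  assert (Hpartial : forall N, sum_f_R0 G N - sum_f_R0 F N = K * sum_f_R0 k N).
  { intros N; rewrite <- minus_sum, scal_sum; apply sum_eq; intros; rewrite Hj; ring. }
  destruct (Req_dec K 0) as [-> | HK].
  - assert (Hzero : Un_cv (fun N => sum_f_R0 G N - sum_f_R0 F N) 0).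
    { intros eps He; exists 0%nat; intros n _.
      rewrite Hpartial, Rmult_0_l; unfold Rdist; rewrite Rminus_diag, Rabs_R0; exact He. }
    pose proof (UL_sequence _ _ _ Hdiff Hzero); lra.
  - assert (Hk : Un_cv (fun N => sum_f_R0 k N) ((lG - lF) / K)).
    { apply (Un_cv_ext (fun N => (sum_f_R0 G N - sum_f_R0 F N) * / K)).
      - intros N; rewrite Hpartial; field; exact HK.
      - apply (CV_mult _ (fun _ => / K)); [exact Hdiff |].
        intros eps He; exists 0%nat; intros n _.
        unfold Rdist; rewrite Rminus_diag, Rabs_R0; exact He. }
    rewrite (series_eq _ _ Hk); field; exact HK.
Qed.

Definition nc_term (x y a b : R) (j : nat) : R :=
  / INR (Factorial.fact j) * (x / 2) ^ j * Ibeta y (a + INR j) b.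

Definition kummer_term (p q x y : R) (n : nat) : R :=
  poch (p + q) n / poch p n * (x * y / 2) ^ n / INR (Factorial.fact n).

(* Since 0 <= I_y <= 1, the series is dominated by the exponential series of x/2. *)
Lemma nc_term_summable x y a b : 0 <= x -> 0 <= y <= 1 -> 0 < a -> 0 < b ->
  { l | Un_cv (fun N => sum_f_R0 (nc_term x y a b) N) l }.
Proof.
  intros Hx Hy Ha Hb.
  apply (Rseries_CV_comp _ (fun j => / INR (Factorial.fact j) * (x / 2) ^ j)).
  - intros n; unfold nc_term; pose proof (pos_INR n).
    pose proof (Ibeta_bounds y (a + INR n) b ltac:(lra) Hb Hy).
    assert (0 <= / INR (Factorial.fact n) * (x / 2) ^ n).
    { apply Rmult_le_pos; [apply Rlt_le, Rinv_0_lt_compat, INR_fact_lt_0 |].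
      apply pow_le; lra. }
    split; [apply Rmult_le_pos; lra |].
    rewrite <- (Rmult_1_r (/ INR (Factorial.fact n) * (x / 2) ^ n)) at 2.
    apply Rmult_le_compat_l; lra.
  - destruct (exist_exp (x / 2)) as [l Hl]; exists l; exact Hl.
Qed.

(* Termwise, the recurrences for I_y produce the Kummer terms: for any exponent c,
   (x/2)^j/j! * y^(c+j)(1-y)^q / (q B(p+j,q)) = y^c (1-y)^q/(q B(p,q)) * kummer_term j. *)
Lemma kernel_term c p q x y j : 0 < p -> 0 < q -> 0 <= y ->
  / INR (Factorial.fact j) * (x / 2) ^ j
    * (beta_kernel (c + INR j) q y / (q * Beta (p + INR j) q))
  = beta_kernel c q y / (q * Beta p q) * kummer_term p q x y j.
Proof.
  intros Hp Hq Hy; unfold beta_kernel, kummer_term.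
  rewrite rpow_plus_nat, Beta_shift_nat by lra.
  replace (x * y / 2) with (x / 2 * y) by field; rewrite Rpow_mult_distr.
  pose proof (poch_pos p j Hp); pose proof (poch_pos (p + q) j ltac:(lra)).
  pose proof (Beta_pos p q Hp Hq); pose proof (INR_fact_neq_0 j).
  field; repeat split; lra.
Qed.

Lemma nc_term_succ_r p q x y j : 0 < p -> 0 < q -> 0 <= y <= 1 ->
  nc_term x y p (q + 1) j - nc_term x y p q j
  = beta_kernel p q y / (q * Beta p q) * kummer_term p q x y j.
Proof.
  intros Hp Hq Hy; rewrite <- kernel_term by lra; unfold nc_term.
  pose proof (pos_INR j).
  rewrite (Ibeta_succ_r y (p + INR j) q) by lra; ring.
Qed.

Lemma nc_term_shift p q x y j : 1 < p -> 0 < q -> 0 <= y <= 1 ->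
  nc_term x y (p - 1) (q + 1) j - nc_term x y p q j
  = beta_kernel (p - 1) q y / (q * Beta p q) * kummer_term p q x y j.
Proof.
  intros Hp Hq Hy; rewrite <- kernel_term by lra; unfold nc_term.
  pose proof (pos_INR j).
  pose proof (Ibeta_shift y (p - 1 + INR j) q ltac:(lra) Hq Hy) as Hshift.
  replace (p - 1 + INR j + 1) with (p + INR j) in Hshift by ring.
  rewrite Hshift; ring.
Qed.

Lemma ncbeta_difference p q p' q' x y K : 0 < p -> 0 < q -> 0 < p' -> 0 < q' ->
  0 <= x -> 0 <= y <= 1 ->
  (forall j, nc_term x y p' q' j - nc_term x y p q j = K * kummer_term p q x y j) ->
  ncbeta p q x y = ncbeta p' q' x y - exp (- x / 2) * K * kummerM (p + q) p (x * y / 2).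
Proof.
  intros Hp Hq Hp' Hq' Hx Hy Hterm.
  destruct (nc_term_summable x y p q Hx Hy Hp Hq) as [l Hl].
  destruct (nc_term_summable x y p' q' Hx Hy Hp' Hq') as [l' Hl'].
  change (ncbeta p q x y) with (exp (- x / 2) * series (nc_term x y p q)).
  change (ncbeta p' q' x y) with (exp (- x / 2) * series (nc_term x y p' q')).
  change (kummerM (p + q) p (x * y / 2)) with (series (kummer_term p q x y)).
  rewrite (series_eq _ _ Hl), (series_eq _ _ Hl'), (series_difference _ _ _ K l l' Hl Hl' Hterm).
  ring.
Qed.

Theorem mainTheorem4 (p q x y : R) :
  0 < p -> 0 < q -> 0 <= x -> 0 <= y <= 1 ->
  ncbeta p q x y =
    ncbeta p (q + 1) x y
    - exp (- x / 2) / (q * Beta p q) * rpow y p * rpow (1 - y) q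
      * kummerM (p + q) p (x * y / 2)
  /\
  ncbetaC p q x y =
    ncbetaC p (q + 1) x y
    + exp (- x / 2) / (q * Beta p q) * rpow y p * rpow (1 - y) q
      * kummerM (p + q) p (x * y / 2)
  /\
  (1 < p ->
   ncbeta p q x y =
    ncbeta (p - 1) (q + 1) x y
    - exp (- x / 2) / (q * Beta p q) * rpow y (p - 1) * rpow (1 - y) q
      * kummerM (p + q) p (x * y / 2)).
Proof.
  intros Hp Hq Hx Hy.
  pose proof (Beta_pos p q Hp Hq) as HB.
  assert (Hq_step : ncbeta p q x y =
    ncbeta p (q + 1) x y
    - exp (- x / 2) / (q * Beta p q) * rpow y p * rpow (1 - y) q
      * kummerM (p + q) p (x * y / 2)).
  { rewrite (ncbeta_difference p q p (q + 1) x y _ Hp Hq Hp ltac:(lra) Hx Hy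
               (fun j => nc_term_succ_r p q x y j Hp Hq Hy)).
    unfold beta_kernel; field; lra. }
  split; [exact Hq_step | split].
  - unfold ncbetaC; rewrite Hq_step; ring.
  - intros Hp1.
    rewrite (ncbeta_difference p q (p - 1) (q + 1) x y _ Hp Hq ltac:(lra) ltac:(lra) Hx Hy
               (fun j => nc_term_shift p q x y j Hp1 Hq Hy)).
    unfold beta_kernel; field; lra.
Qed.
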